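(* Let $M$ be a matroid on the ground set $E$ and let $\ell:E\to\mathbb{R}$ be a generic real-valued function. Then: (A) The order $<_\ell$ of $\mathcal{B}(M)$ induced by ordering the $\ell$-weights is a shelling order of the independence complex $\mathcal{I}(M)$. (B) For every basis $B$, the restriction set of $B$ in the shelling order $<_\ell$ is the internally passive set of $B$ with respect to the total order on $E$ induced by $\ell$.
   Context: For a matroid $M$ on finite set $E$, $\mathcal{I}(M)$ is its independence complex and $\mathcal{B}(M)$ its set of bases. For $A\subseteq E$, the $\ell$-weight is $\ell(A)=\sum_{a\in A}\ell(a)$. Generic means $\ell$ takes distinct values on elements of $E$ and distinct weights on distinct bases; $<_\ell$ is defined by $B<_\ell B'$ iff $\ell(B)<\ell(B')$, and the total order on $E$ induced by $\ell$ is $e<e'$ iff $\ell(e)<\ell(e')$. A shelling order of a pure simplicial complex is a total order $F_1<\dots<F_k$ of its facets such that for each $j\ge2$, $\langle F_1,\dots,F_{j-1}\rangle\cap\langle F_j\rangle$ is pure of dimension one less than the complex. For a shelling order, the restriction set $\mathcal{R}(F_j)$ is the unique subset of $F_j$ such that the faces of $\langle F_1,\dots,F_j\rangle$ not in $\langle F_1,\dots,F_{j-1}\rangle$ are exactly the subsets of $F_j$ containing $\mathcal{R}(F_j)$. For a total order $<$ on $E$ and a basis $B$, the internally passive set $IP_<(B)$ is the set of $b\in B$ for which there exists $b'\notin B$ with $b'<b$ and $(B\setminus\{b\})\cup\{b'\}$ a basis. *)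

From HB Require Import structures.
From mathcomp Require Import all_boot all_order all_algebra.
From mathcomp Require Import reals.
Set Implicit Arguments. Unset Strict Implicit. Unset Printing Implicit Defensive.
Import Order.TTheory GRing.Theory Num.Theory.

Section Matroids.
Variable E : finType.

Definition matroid (I : pred {set E}) : Prop :=
  [/\ I set0,
      (forall A B : {set E}, B \subset A -> I A -> I B) &
      (forall A B : {set E}, I A -> I B -> #|A| < #|B| ->
         exists2 x, x \in B :\: A & I (x |: A))].

Definition basis (I : pred {set E}) (B : {set E}) : bool := maxset I B.

Variable R : realType.

Definition weight (l : E -> R) (A : {set E}) : R := (\sum_(a in A) l a)%R.

Definition generic (I : pred {set E}) (l : E -> R) : Prop :=
  injective l /\
  (forall B B', basis I B -> basis I B' -> B != B' -> weight l B != weight l B').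

Definition weight_order (I : pred {set E}) (l : E -> R) : seq {set E} :=
  sort (fun A B => (weight l A <= weight l B)%R) (enum [pred B | basis I B]).

Definition gen (Fs : seq {set E}) : pred {set E} :=
  fun S => has (fun F : {set E} => S \subset F) Fs.

(* A (nonempty-by-containing-set0) complex K is pure with all facets of
   cardinality n (i.e. pure of dimension n-1). *)
Definition pure_card (K : pred {set E}) (n : nat) : Prop :=
  (forall S, K S -> #|S| <= n) /\
  (forall S, K S -> exists2 T, K T & (S \subset T) && (#|T| == n)).

Definition shelling_order (K : pred {set E}) (s : seq {set E}) : Prop :=
  [/\ uniq s,
      (forall F, (F \in s) = maxset K F) &
      (forall j, 0 < j < size s ->
         pure_card (fun S => gen (take j s) S && (S \subset nth set0 s j))
                   ((\max_(F <- s) #|F|) - 1))].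

(* Rset is the restriction set of the j-th facet (0-indexed) of s:
   the faces of <F_1..F_j> not in <F_1..F_{j-1}> are exactly the subsets of
   F_j containing Rset (such a set is necessarily unique). *)
Definition is_restriction_set (s : seq {set E}) (j : nat) (Rset : {set E}) : Prop :=
  Rset \subset nth set0 s j /\
  forall S : {set E},
    (gen (take j.+1 s) S && ~~ gen (take j s) S) =
    (Rset \subset S) && (S \subset nth set0 s j).

Definition int_passive (I : pred {set E}) (l : E -> R) (B : {set E}) : {set E} :=
  [set b in B | [exists b', [&& b' \notin B, (l b' < l b)%R &
                                basis I (b' |: (B :\ b))]]].

End Matroids.

Set Warnings "-notation-overridden,-ambiguous-paths,-notation-incompatible-prefix".
From HB Require Import structures.
From mathcomp Require Import all_boot all_order all_algebra.
From mathcomp Require Import reals lra.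
Set Implicit Arguments. Unset Strict Implicit. Unset Printing Implicit Defensive.
Import Order.TTheory GRing.Theory Num.Theory.

(* By genericity the bases preceding F_j in <_l are exactly the lighter ones,
   so a face S of F_j already occurs before F_j iff S lies in a lighter basis.
   By local optimality of matroid bases this happens iff some single exchange
   F_j - b + b' with l b' < l b and b outside S is a basis, i.e. iff S misses
   an internally passive element of F_j.  Hence the new faces at step j are
   the S with IP(F_j) <= S <= F_j, and the old faces inside F_j are the
   subsets of F_j avoiding some b in IP(F_j): a pure complex whose facets are
   the F_j - b, all of size rank - 1. *)

Section SubsetComplex.
Variable E : finType.

Lemma eq_pure_card (K K' : pred {set E}) n :
  K =1 K' -> pure_card K n -> pure_card K' n.
Proof.
move=> eqK [le_n ext]; split=> [S | S]; rewrite -eqK; first exact: le_n.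
by case/ext=> T KT STn; exists T; rewrite -?eqK.
Qed.

Lemma pure_card_subsets_not_containing (B P : {set E}) :
  P \subset B -> pure_card (fun S => (S \subset B) && ~~ (P \subset S)) (#|B| - 1).
Proof.
move=> PB; split=> S /andP[SB PS].
  have ltSB : #|S| < #|B|.
    apply/proper_card; rewrite properE SB; apply: contra PS.
    exact: subset_trans PB.
  by rewrite subn1 -ltnS (ltn_predK ltSB).
have [b bP bS] := subsetPn PS; have bB := subsetP PB b bP.
exists (B :\ b).
  rewrite subsetDl; apply/subsetPn; exists b => //.
  by rewrite !inE eqxx.
apply/andP; split; last by rewrite (cardsD1 b B) bB add1n subn1.
apply/subsetP=> x xS; rewrite !inE (subsetP SB x xS) andbT.
by apply: contraNneq bS => <-.
Qed.

End SubsetComplex.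

Section MatroidBases.
Variables (E : finType) (I : pred {set E}).
Hypothesis M : matroid I.

Lemma basis_indep B : basis I B -> I B.
Proof. by case/maxsetP. Qed.

Lemma indep_card_le_basis A B : basis I B -> I A -> #|A| <= #|B|.
Proof.
case: M => _ _ augment /maxsetP[IB maxB] IA; rewrite leqNgt; apply/negP=> ltBA.
have [x /setDP[_ xB] Ix] := augment _ _ IB IA ltBA.
have /setP/(_ x) := maxB _ Ix (subsetUr _ _).
by rewrite !inE eqxx (negbTE xB).
Qed.

Lemma card_basis A B : basis I A -> basis I B -> #|A| = #|B|.
Proof.
move=> bA bB; apply/eqP; rewrite eqn_leq.
by rewrite !indep_card_le_basis ?basis_indep.
Qed.

Lemma basis_of_card A B : basis I B -> I A -> #|A| = #|B| -> basis I A.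
Proof.
move=> bB IA cardA; apply/maxsetP; split=> // C IC AC.
by apply/eqP; rewrite eq_sym eqEcard AC cardA indep_card_le_basis.
Qed.

Lemma indep_augment_to_card A B : I A -> I B -> #|A| <= #|B| ->
  exists A' : {set E}, [/\ A \subset A', A' \subset A :|: B, I A' & #|A'| = #|B|].
Proof.
have [n] := ubnP (#|B| - #|A|); elim: n A => // n IH A ltBAn IA IB.
rewrite leq_eqVlt => /predU1P[eqAB | ltAB].
  by exists A; rewrite subsetUl.
case: M => _ _ augment; have [x /setDP[xB xA] Ix] := augment _ _ IA IB ltAB.
have [||A' [AA' A'AB IA' cardA']] := IH (x |: A) _ Ix IB.
- by rewrite cardsU1 xA add1n subnS prednK ?subn_gt0 // -ltnS.
- by rewrite cardsU1 xA.
exists A'; split=> //; first exact: subset_trans (subsetUr _ _) AA'.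
apply: subset_trans A'AB _.
by rewrite -setUA subUset subxx andbT sub1set !inE xB orbT.
Qed.

Lemma basis_exchange B B' e : basis I B -> basis I B' -> e \in B' -> e \notin B ->
  exists2 f, f \in B :\: B' & basis I (e |: (B :\ f)).
Proof.
move=> bB bB' eB' eB; case: (M) => _ hereditary _.
set A := e |: (B :&: B').
have IA : I A.
  apply: hereditary (basis_indep bB'); rewrite subUset sub1set eB'.
  exact: subsetIr.
have [A' [AA' A'AB IA' cardA']] :=
  indep_augment_to_card IA (basis_indep bB) (indep_card_le_basis bB IA).
have A'eB : A' \subset e |: B.
  apply: subset_trans A'AB _; rewrite subUset subsetUr andbT subUset subsetUl.
  by rewrite (subset_trans (subsetIl _ _) (subsetUr _ _)).
have /subsetPn[f feB fA'] : ~~ (e |: B \subset A').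
  by apply/negP=> /subset_leq_card; rewrite cardsU1 eB cardA' ltnn.
have eA' : e \in A' by rewrite (subsetP AA') // !inE eqxx.
have fB : f \in B by move: feB; rewrite !inE; case: eqP fA' => // ->; rewrite eA'.
have fB' : f \notin B'.
  by apply: contra fA' => fB'; rewrite (subsetP AA') // !inE fB fB' orbT.
exists f; first by rewrite inE fB fB'.
suff <- : A' = e |: (B :\ f) by apply: basis_of_card bB IA' cardA'.
apply/eqP; rewrite eqEcard cardsU1 cardA' (cardsD1 f B) fB !inE (negbTE eB).
rewrite andbF leqnn andbT; apply/subsetP=> x xA'.
move: (subsetP A'eB x xA'); rewrite !inE => /orP[-> // | ->].
by rewrite andbT; apply/orP; right; apply: contraNneq fA' => <-.
Qed.

End MatroidBases.

Section LighterBases.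
Variables (E : finType) (I : pred {set E}) (R : realType) (l : E -> R).
Hypothesis M : matroid I.

Lemma weight_exchange (B : {set E}) (e f : E) : e \notin B -> f \in B ->
  weight l (e |: (B :\ f)) = (weight l B - l f + l e)%R.
Proof.
move=> eB fB; rewrite /weight big_setU1 /=; last by rewrite !inE (negbTE eB) andbF.
rewrite (big_setD1 f fB) /=; lra.
Qed.

Lemma int_passive_subset (B : {set E}) : int_passive I l B \subset B.
Proof. by apply/subsetP=> x; rewrite inE => /andP[]. Qed.

(* Local optimality: while B is not the lightest basis through S, an exchange
   with the l-least element of the symmetric difference either lightens B
   itself or yields a lighter basis through S closer to B. *)
Lemma lighter_basis_int_passive (B B' S : {set E}) : injective l ->
  basis I B -> basis I B' -> S \subset B -> S \subset B' ->
  (weight l B' < weight l B)%R ->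
  exists2 b, b \in int_passive I l B & b \notin S.
Proof.
move=> inj bB + SB; have [n] := ubnP #|B :\: B'|.
elim: n B' => // n IH B' ltBn bB' SB' ltw.
set D := (B :\: B') :|: (B' :\: B).
have /set0Pn[x0 x0D] : D != set0.
  rewrite setU_eq0 !setD_eq0 -eqEsubset.
  by apply: contraTneq ltw => ->; rewrite ltxx.
have [e eD e_min] := arg_minP l x0D; have {}eD : e \in D := eD.
have lt_e x : x \in D -> x != e -> (l e < l x)%R.
  by move=> xD xe; rewrite lt_neqAle (inj_eq inj) eq_sym xe e_min.
have [eB | eB] := boolP (e \in B).
  have eB' : e \notin B' by move: eD; rewrite !inE eB; case: (e \in B').
  have [f /setDP[fB' fB] bB'ef] := basis_exchange M bB' bB eB eB'.
  have lt_ef : (l e < l f)%R.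
    by apply: lt_e; [rewrite !inE fB fB' orbT | apply: contraNneq fB => ->].
  have closer : #|B :\: (e |: (B' :\ f))| < #|B :\: B'|.
    apply/proper_card/properP; split.
      apply/subsetP=> x; rewrite !inE negb_or negb_and negbK.
      by case/andP=> /andP[_ /orP[/eqP -> | ->]]; rewrite ?(negbTE fB) ?andbT.
    by exists e; rewrite !inE ?eqxx ?eB ?andbF // (negbTE eB').
  apply: (IH _ (leq_trans closer ltBn)) => //.
  - apply/subsetP=> x xS; rewrite !inE (subsetP SB' x xS) andbT.
    by apply/predU1P; right; apply: contraNneq fB => <-; apply: (subsetP SB).
  - by rewrite weight_exchange //; lra.
have eB' : e \in B' by move: eD; rewrite !inE (negbTE eB) andbF.
have [f /setDP[fB fB'] bBef] := basis_exchange M bB bB' eB' eB.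
exists f; last by apply: contra fB' => /(subsetP SB').
rewrite inE fB; apply/existsP; exists e; rewrite eB bBef andbT /=.
by apply: lt_e; [rewrite !inE fB fB' | apply: contraNneq eB => <-].
Qed.

Lemma lighter_basisP (B S : {set E}) : injective l -> basis I B -> S \subset B ->
  reflect (exists2 X, basis I X & (S \subset X) && (weight l X < weight l B)%R)
          (~~ (int_passive I l B \subset S)).
Proof.
move=> inj bB SB; apply: (iffP idP) => [/subsetPn[b] | [X bX /andP[SX ltXB]]].
  rewrite inE => /andP[bB' /existsP[b' /and3P[b'B lt_b'b bX]]] bS.
  exists (b' |: (B :\ b)) => //; apply/andP; split; last first.
    by rewrite weight_exchange //; lra.
  apply/subsetP=> x xS; rewrite !inE (subsetP SB x xS) andbT.
  by apply/predU1P; right; apply: contraNneq bS => <-.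
have [b bIP bS] := lighter_basis_int_passive inj bB bX SB SX ltXB.
by apply/subsetPn; exists b.
Qed.

End LighterBases.

Section WeightOrder.
Variables (E : finType) (I : pred {set E}) (R : realType) (l : E -> R).
Hypotheses (M : matroid I) (G : generic I l).

Local Notation order := (weight_order I l).

Lemma mem_weight_order F : (F \in order) = basis I F.
Proof. by rewrite mem_sort mem_enum inE. Qed.

Lemma weight_order_uniq : uniq order.
Proof. by rewrite sort_uniq enum_uniq. Qed.

Lemma basis_nth_weight_order j : j < size order -> basis I (nth set0 order j).
Proof. by move=> ltj; rewrite -mem_weight_order mem_nth. Qed.

Lemma weight_order_lt i j : i < j -> j < size order ->
  (weight l (nth set0 order i) < weight l (nth set0 order j))%R.
Proof.
case: G => _ distinct ltij ltj; have lti := ltn_trans ltij ltj.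
have sorted_order : sorted (fun A B => weight l A <= weight l B)%R order.
  by apply: sort_sorted => A B; apply: le_total.
have le_weight_trans : transitive (fun A B => weight l A <= weight l B)%R.
  by move=> B A C; apply: le_trans.
rewrite lt_neqAle (sorted_ltn_nth le_weight_trans set0 sorted_order) ?inE // andbT.
apply: distinct; rewrite ?basis_nth_weight_order //.
by rewrite nth_uniq ?weight_order_uniq // ltn_eqF.
Qed.

Lemma mem_take_weight_order j X : j < size order -> basis I X ->
  (X \in take j order) = (weight l X < weight l (nth set0 order j))%R.
Proof.
move=> ltj bX; have Xorder : X \in order by rewrite mem_weight_order.
rewrite in_take // -{2}(nth_index set0 Xorder).
have ltX : index X order < size order by rewrite index_mem.
case: ltngtP => [ltXj | ltjX | ->]; last by rewrite ltxx.
  by rewrite weight_order_lt.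
by rewrite lt_gtF // weight_order_lt.
Qed.

Lemma gen_take_weight_orderP j (S : {set E}) : j < size order ->
  reflect (exists2 X, basis I X & (S \subset X) && (weight l X < weight l (nth set0 order j))%R)
          (gen (take j order) S).
Proof.
move=> ltj; apply: (iffP hasP) => [[X Xj SX] | [X bX /andP[SX ltX]]].
  have bX : basis I X by rewrite -mem_weight_order (mem_take Xj).
  by exists X; rewrite // SX -mem_take_weight_order.
by exists X; rewrite // mem_take_weight_order.
Qed.

Lemma gen_take_weight_order j (S : {set E}) : j < size order -> S \subset nth set0 order j ->
  gen (take j order) S = ~~ (int_passive I l (nth set0 order j) \subset S).
Proof.
move=> ltj SF; case: G => inj _.
exact: sameP (gen_take_weight_orderP S ltj)
             (lighter_basisP M inj (basis_nth_weight_order ltj) SF).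
Qed.

Lemma bigmax_card_weight_order j : j < size order ->
  \max_(F <- order) #|F| = #|nth set0 order j|.
Proof.
move=> ltj; apply/eqP; rewrite eqn_leq; apply/andP; split.
  apply/bigmax_leqP_seq => F; rewrite mem_weight_order => bF _.
  by rewrite (card_basis M bF (basis_nth_weight_order ltj)).
by rewrite (leq_bigmax_seq (F := fun F : {set E} => #|F|)) ?mem_nth.
Qed.

Lemma weight_order_restriction_set j : j < size order ->
  is_restriction_set order j (int_passive I l (nth set0 order j)).
Proof.
move=> ltj; split=> [|S]; first exact: int_passive_subset.
rewrite /gen (take_nth set0 ltj) has_rcons -/(gen _ S).
case SF: (S \subset nth set0 order j); last by rewrite /= andbN andbF.
by rewrite /= gen_take_weight_order // negbK andbT.
Qed.

Lemma weight_order_shelling : shelling_order I order.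
Proof.
split=> [|F|j /andP[_ ltj]]; rewrite ?weight_order_uniq ?mem_weight_order //.
rewrite (bigmax_card_weight_order ltj).
apply: eq_pure_card (pure_card_subsets_not_containing (int_passive_subset I l _)).
move=> S /=; case SF: (S \subset nth set0 order j); last by rewrite andbF.
by rewrite gen_take_weight_order // andbT.
Qed.

End WeightOrder.

Theorem theorem1p2 (E : finType) (I : pred {set E}) (R : realType) (l : E -> R) :
  matroid I -> generic I l ->
  shelling_order I (weight_order I l) /\
  (forall j, j < size (weight_order I l) ->
     is_restriction_set (weight_order I l) j
       (int_passive I l (nth set0 (weight_order I l) j))).
Proof.
move=> M G; split; first exact: weight_order_shelling.
exact: weight_order_restriction_set.
Qed.
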